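(* Let $n\ge1$ and let $\lambda=\sum_{k=1}^n m_k\omega_k$ be a dominant integral weight of $\mathfrak{sp}_{2n}(\mathbb C)$. Then the symplectic FFLV basis $\{f^{\mathsf p}\nu_\lambda:\mathsf p\in S(\lambda)\}$ of $V_\lambda$ is in a weight preserving one-to-one correspondence with the set $\mathrm{SyST}_\lambda$ of symplectic PBW-semistandard tableaux of shape $\lambda$ with entries in $\mathcal N$.
   Context: Notation for $\mathfrak{sp}_{2n}$: $\varepsilon_1,\dots,\varepsilon_n$ is the standard basis of $\mathfrak h^*$, simple roots $\alpha_i=\varepsilon_i-\varepsilon_{i+1}$ ($i<n$), $\alpha_n=2\varepsilon_n$, fundamental weights $\omega_k=\varepsilon_1+\dots+\varepsilon_k$. For $1\le j\le n$ put $\bar j:=2n+1-j$. Let $\mathsf J=\{1<\dots<n<\overline{n-1}<\dots<\bar 1\}$; for $x\in\mathsf J$, $x+1$ is the successor of $x$ in $\mathsf J$. Positive roots: $\alpha_{i,j}=\alpha_i+\dots+\alpha_j$ for $1\le i\le j\le n$ and $\alpha_{i,\bar j}=\alpha_i+\dots+\alpha_n+\alpha_{n-1}+\dots+\alpha_j$ for $1\le i\le j\le n$ (with $\alpha_{i,\bar n}=\alpha_{i,n}$); $\alpha_{\bar j}:=\alpha_{j,\bar j}$. Fix nonzero root vectors $f_\alpha\in\mathfrak n^-_{-\alpha}$. A symplectic Dyck path is a sequence $(\mathsf d(0),\dots,\mathsf d(s))$ of positive roots with $\mathsf d(0)=\alpha_i$ simple, $\mathsf d(s)=\alpha_j$ or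 $\alpha_{\bar j}$ for some $j$, and if $\mathsf d(r)=\alpha_{p,q}$ ($p,q\in\mathsf J$) then $\mathsf d(r+1)\in\{\alpha_{p,q+1},\alpha_{p+1,q}\}$. The FFLV polytope $P(\lambda)\subset\mathbb R^{n^2}_{\ge0}$ consists of $(\mathsf p_\alpha)_{\alpha>0}$, $\mathsf p_\alpha\ge0$, such that for every Dyck path with $\mathsf d(0)=\alpha_i$: $\sum_r\mathsf p_{\mathsf d(r)}\le m_i+\dots+m_j$ if $\mathsf d(s)=\alpha_j$, and $\le m_i+\dots+m_n$ if $\mathsf d(s)=\alpha_{\bar j}$. $S(\lambda)$ = integral points of $P(\lambda)$, $f^{\mathsf p}=\prod_\alpha f_\alpha^{\mathsf p_\alpha}$ (fixed order). By Feigin–Fourier–Littelmann, $\{f^{\mathsf p}\nu_\lambda\}_{\mathsf p\in S(\lambda)}$ is a basis of the irreducible module $V_\lambda$ with highest weight vector $\nu_\lambda$ (the symplectic FFLV basis); $f^{\mathsf p}\nu_\lambda$ has weight $\lambda-\sum_\alpha\mathsf p_\alpha\alpha$. Tableaux: $\lambda$ is identified with the partition $\lambda_i=m_i+\dots+m_n$ and its Young diagram $Y_\lambda$ (English convention; rows $i$, columns $j$; $\mu_j$ = length of column $j$). Let $\mathcal N=\{1<\dots<n<\bar n<\dots<\bar1\}$. A symplectic PBW-semistandard tableau of shape $\lambda$ is a filling $T_{i,j}\in\mathcal N$ of $Y_\lambda$ such that: (i) if $T_{i,j}\le\mu_j$ then $T_{i,j}=i$; (ii) if $T_{i_1,j}\ne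 i_1$ and $i_2>i_1$ then $T_{i_1,j}>T_{i_2,j}$; (iii) if $T_{i,j}=i$ and $T_{i',j}=\bar i$ for some $i'$, then $i'<i$; (iv) for every $j>1$ and every $i$ there is $i'\ge i$ with $T_{i',j-1}\ge T_{i,j}$. The weight of a tableau is the sum over its columns of $\sum_{i\le n \text{ appearing}}\varepsilon_i-\sum_{j\le n:\ \bar j\text{ appearing}}\varepsilon_j$. *)

(* Conventions (1-based, nat-encoded):
   - J = {1<..<n<\bar{n-1}<..<\bar 1} is encoded by positions 1..2n-1, where
     \bar j sits at position 2n-j (so \bar n would be position n, consistent
     with alpha_{i,\bar n} = alpha_{i,n}); the successor in J is +1.
   - A positive root alpha_{p,q} (p in 1..n, q a position of J) is the pair
     (p,q) with p <= q <= 2n-p.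
   - N = {1<..<n<\bar n<..<\bar 1} is encoded by 1..2n with \bar j = 2n+1-j
     (the numeric order is the order of N).
   - Weights are nat -> int functions: coordinate k (1<=k<=n) is the
     coefficient of epsilon_k. *)
From mathcomp Require Import all_boot all_order all_algebra.
Set Implicit Arguments. Unset Strict Implicit. Unset Printing Implicit Defensive.
Import GRing.Theory Num.Theory.

Local Open Scope ring_scope.

Definition weight := nat -> int.

Definition eps (k : nat) : weight := fun i => ((i == k) : nat)%:Z.

Definition alpha (n k : nat) : weight := fun i =>
  if (k < n)%N then eps k i - eps k.+1 i else 2%:Z * eps n i.

Definition rootwt (n p q : nat) : weight := fun i =>
  if (q <= n)%N then \sum_(p <= k < q.+1) alpha n k i
  else \sum_(p <= k < n.+1) alpha n k i
       + \sum_(2 * n - q <= k < n) alpha n k i.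

Definition isroot (n p q : nat) : bool :=
  [&& (1 <= p)%N, (p <= n)%N, (p <= q)%N & (q <= 2 * n - p)%N].

(* highest weight lambda = sum m_k omega_k, in epsilon coordinates *)
Definition lam (m : nat -> nat) (n : nat) : weight := fun i =>
  (\sum_(i <= l < n.+1) m l)%N%:Z.

(* points of R^{n^2}: finite functions on pairs (p,q) in [0,n]x[0,2n],
   required to vanish off the positive roots *)
Definition point (n : nat) := {ffun 'I_n.+1 * 'I_(2 * n).+1 -> nat}.

Definition coef (n : nat) (P : point n) (x : nat * nat) : nat :=
  if (x.1 <= n)%N && (x.2 <= 2 * n)%N then P (inord x.1, inord x.2) else 0%N.

Definition dyck_step (n : nat) (a b : nat * nat) : bool :=
  isroot n b.1 b.2 && ((b == (a.1, a.2.+1)) || (b == (a.1.+1, a.2))).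

Definition dyck_from (n i : nat) (d0 : nat * nat) (ds : seq (nat * nat)) : bool :=
  [&& (1 <= i)%N, (i <= n)%N, d0 == (i, i) & path (dyck_step n) d0 ds].

Definition in_S (m : nat -> nat) (n : nat) (P : point n) : Prop :=
  (forall x : 'I_n.+1 * 'I_(2 * n).+1, ~~ isroot n x.1 x.2 -> P x = 0%N) /\
  (forall (i : nat) (d0 : nat * nat) (ds : seq (nat * nat)),
     dyck_from n i d0 ds ->
     let s := (\sum_(x <- d0 :: ds) coef P x)%N in
     (forall j, (j <= n)%N -> last d0 ds = (j, j) ->
        (s <= \sum_(i <= l < j.+1) m l)%N) /\
     (forall j, (1 <= j)%N -> (j <= n)%N -> last d0 ds = (j, 2 * n - j)%N ->
        (s <= \sum_(i <= l < n.+1) m l)%N)).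

(* weight of f^P nu_lambda : lambda - sum_alpha P_alpha alpha *)
Definition pwt (m : nat -> nat) (n : nat) (P : point n) : weight := fun k =>
  lam m n k - \sum_(x : 'I_n.+1 * 'I_(2 * n).+1)
                  (P x)%:Z * rootwt n x.1 x.2 k.

Definition lamrow (m : nat -> nat) (n i : nat) : nat := (\sum_(i <= l < n.+1) m l)%N.
Definition lam1 (m : nat -> nat) (n : nat) : nat := lamrow m n 1.

Definition cell (m : nat -> nat) (n i j : nat) : bool :=
  [&& (1 <= i)%N, (i <= n)%N, (1 <= j)%N & (j <= lamrow m n i)%N].

Definition mu (m : nat -> nat) (n j : nat) : nat :=
  count (fun i => cell m n i j) (iota 1 n).

(* fillings: finite functions on [0,n]x[0,lam1], vanishing off Y_lambda *)
Definition tab (m : nat -> nat) (n : nat) := {ffun 'I_n.+1 * 'I_(lam1 m n).+1 -> nat}.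

Definition tcoef (m : nat -> nat) (n : nat) (T : tab m n) (i j : nat) : nat :=
  if (i <= n)%N && (j <= lam1 m n)%N then T (inord i, inord j) else 0%N.

Definition is_SyST (m : nat -> nat) (n : nat) (T : tab m n) : Prop :=
  let t := tcoef T in
  (forall x : 'I_n.+1 * 'I_(lam1 m n).+1, ~~ cell m n x.1 x.2 -> T x = 0%N) /\
  (forall i j, cell m n i j -> (1 <= t i j)%N /\ (t i j <= 2 * n)%N) /\
  (* (i) *)
  (forall i j, cell m n i j -> (t i j <= mu m n j)%N -> t i j = i) /\
  (* (ii) *)
  (forall i1 i2 j, cell m n i1 j -> cell m n i2 j -> t i1 j <> i1 ->
     (i1 < i2)%N -> (t i2 j < t i1 j)%N) /\
  (* (iii) *)
  (forall i i' j, cell m n i j -> cell m n i' j -> t i j = i ->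
     t i' j = ((2 * n).+1 - i)%N -> (i' < i)%N) /\
  (* (iv) *)
  (forall i j, (1 < j)%N -> cell m n i j ->
     exists i', [/\ (i <= i')%N, cell m n i' j.-1 & (t i j <= t i' j.-1)%N]).

Definition appears (m : nat -> nat) (n : nat) (T : tab m n) (j v : nat) : bool :=
  has (fun i => cell m n i j && (tcoef T i j == v)) (iota 1 n).

Definition twt (m : nat -> nat) (n : nat) (T : tab m n) : weight := fun k =>
  \sum_(1 <= j < (lam1 m n).+1)
     ((appears T j k : nat)%:Z - (appears T j ((2 * n).+1 - k)%N : nat)%:Z).

(* For an FFLV point P and a positive root alpha_{p,q}, let reach(p,q) be the
   maximum, over the Dyck paths starting at alpha_{p,q} and ending at some
   alpha_{p',q'}, of the P-weight of the path plus lambda_{q'+1}.  It drops by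
   at least P_{p,q} when passing to a larger root, and the Dyck path inequalities
   give reach(p,q) <= lambda_p.  The tableau of P carries the letter of
   alpha_{p,q} in row p exactly in the P_{p,q} columns j with
   reach(p,q) - P_{p,q} < j <= reach(p,q), and the letter p elsewhere; the
   conditions (i)-(iv) follow from the monotonicity of reach.
   Conversely, P_{p,q} is read off a tableau as the number of columns holding
   alpha_{p,q} in row p.  Two comparable roots never share a column, so a Dyck
   path meets each column at most once, which gives the FFLV inequalities; and
   (ii)-(iv) force the columns of each root to be exactly the interval above,
   so the two maps are inverse.  The weights agree column by column, since the
   letter of alpha_{p,q} contributes epsilon_p - alpha_{p,q} where the letter p
   would contribute epsilon_p. *)

From mathcomp Require Import all_boot all_order all_algebra zify.
Set Implicit Arguments. Unset Strict Implicit. Unset Printing Implicit Defensive.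

Lemma sum_interval_indicator a b N :
  \sum_(1 <= j < N.+1) (a < j <= b : nat) = minn b N - a.
Proof.
elim: N => [|N IH]; first by rewrite big_geq //; lia.
by rewrite big_nat_recr //= IH; case: (ltnP a N.+1); case: (leqP N.+1 b) => /=; lia.
Qed.

Lemma leq_sum_indicator (S1 S2 : pred nat) N : subpred S1 S2 ->
  \sum_(1 <= j < N.+1) (S1 j : nat) <= \sum_(1 <= j < N.+1) (S2 j : nat).
Proof. by move=> sub; apply: leq_sum => j _; case: (boolP (S1 j)) => // /sub ->. Qed.

Lemma interval_of_left_closed (S : pred nat) f N :
  (forall j, S j -> f < j <= N) -> (forall j, S j -> f < j.-1 -> S j.-1) ->
  S =1 [pred j | f < j <= f + \sum_(1 <= i < N.+1) (S i : nat)].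
Proof.
move=> bounded step.
have closed j j' : S j -> f < j' <= j -> S j'.
  elim: j => [|j IH] Sj /andP[fj' j'j]; first lia.
  case: (eqVneq j' j.+1) => [-> // | ne].
  by apply: IH; [exact: (step j.+1 Sj (ltac:(lia))) | lia].
move=> j /=; case: (boolP (S j)) => Sj.
  have /andP[fj jN] := bounded j Sj.
  have := @leq_sum_indicator [pred i | f < i <= j] S N (fun i => closed j i Sj).
  by rewrite sum_interval_indicator; lia.
apply/esym/negP => /andP[fj jc].
have sub : subpred S [pred i | f < i <= j.-1].
  move=> i Si; have /andP[fi _] := bounded i Si; rewrite /= fi /=.
  by rewrite leqNgt; apply: contraNN Sj => ji; apply: closed Si _; lia.
by have := leq_sum_indicator N sub; rewrite sum_interval_indicator; lia.
Qed.

Lemma sum_indicator_pairwise_le1 (T : eqType) (r : rel T) (F : pred T) s :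
  pairwise r s -> (forall x y, r x y -> F x -> F y -> False) ->
  \sum_(x <- s) (F x : nat) <= 1.
Proof.
elim: s => [|x s IH] /=; first by rewrite big_nil.
case/andP=> rx rs excl; rewrite big_cons; case: (boolP (F x)) => Fx; last exact: IH.
rewrite big1_seq // => y /andP[_ ys]; apply/eqP; rewrite eqb0; apply/negP => Fy.
by case: (excl x y) => //; move/allP: rx; apply.
Qed.

Lemma last_le_sum (T : Type) (F : T -> nat) x s : F (last x s) <= \sum_(y <- x :: s) F y.
Proof.
elim: s x => [|y s IH] x /=; first by rewrite big_seq1.
by rewrite big_cons (leq_trans (IH y)) ?leq_addl.
Qed.

(** * The Young diagram of lambda *)

Section Shape.
Variables (n : nat) (m : nat -> nat).
Local Notation lam := (lamrow m n).
Local Notation cell := (cell m n).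

Lemma lamrow_split i j : i <= j <= n.+1 -> lam i = \sum_(i <= l < j) m l + lam j.
Proof. by case/andP=> ij jn; rewrite /lamrow (big_cat_nat ij) // ltnS. Qed.

Lemma lamrow_eq0 i : n < i -> lam i = 0.
Proof. by move=> ni; rewrite /lamrow big_geq. Qed.

Lemma lamrow_nonincr i j : i <= j -> lam j <= lam i.
Proof.
move=> ij; case: (leqP j n.+1) => jn.
  by rewrite (@lamrow_split i j) ?ij // leq_addl.
by rewrite lamrow_eq0 // ltnW.
Qed.

Lemma lamrow_le_lam1 i : 0 < i -> lam i <= lam1 m n.
Proof. exact: lamrow_nonincr. Qed.

Lemma cell_bounds i j : cell i j -> [/\ 0 < i, i <= n, 0 < j & j <= lam i].
Proof. by case/and4P. Qed.

Lemma cell_mem_iota i j : cell i j -> i \in iota 1 n.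
Proof. by rewrite mem_iota; case/cell_bounds; lia. Qed.

Lemma cell_le_lam1 i j : cell i j -> (i <= n) && (j <= lam1 m n).
Proof.
by case/cell_bounds=> i0 -> _ /leq_trans; apply; apply: lamrow_le_lam1.
Qed.

Lemma cell_up i i' j : cell i j -> 0 < i' <= i -> cell i' j.
Proof.
case/cell_bounds=> _ iN j0 ji /andP[i'0 i'i]; rewrite /cell i'0 j0 (leq_trans i'i iN).
exact: leq_trans ji (lamrow_nonincr i'i).
Qed.

Lemma cell_left i j : cell i j -> 1 < j -> cell i j.-1.
Proof. by case/cell_bounds=> *; rewrite /cell; lia. Qed.

Lemma cell_le_mu i j : cell i j -> i <= mu m n j.
Proof.
move=> c; have [_ iN _ _] := cell_bounds c.
rewrite /mu -[n in iota _ n](subnKC iN) iotaD count_cat.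
rewrite (eq_in_count (a2 := predT)) ?count_predT ?size_iota ?leq_addr //.
by move=> x; rewrite mem_iota => /andP[x0 xi]; apply: (cell_up c); lia.
Qed.

Lemma mu_le q j : 0 < j -> lam q.+1 < j -> mu m n j <= q.
Proof.
move=> j0 lt; rewrite /mu; case: (leqP n q) => nq.
  by apply: leq_trans (count_size _ _) _; rewrite size_iota.
rewrite -[n in iota _ n](subnKC (ltnW nq)) iotaD count_cat.
rewrite (eq_in_count (a1 := fun i => cell i j) (a2 := pred0) (s := iota (1 + q) _)).
  by rewrite count_pred0 addn0; apply: leq_trans (count_size _ _) _; rewrite size_iota.
move=> x; rewrite mem_iota => /andP[qx _]; apply/negbTE/negP => /cell_bounds[_ _ _].
by have := @lamrow_nonincr q.+1 x; lia.
Qed.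

End Shape.

(** * Positive roots and Dyck paths *)

Lemma isroot_ind n (Q : nat -> nat -> Prop) :
  (forall p q, isroot n p q ->
     (forall p' q', isroot n p' q' -> p + q < p' + q' -> Q p' q') -> Q p q) ->
  forall p q, isroot n p q -> Q p q.
Proof.
move=> IH; suff : forall k p q, isroot n p q -> 2 * n - (p + q) < k -> Q p q.
  by move=> h p q r; apply: (h (2 * n).+1) => //; lia.
elim=> [|k IHk] p q r lt; first lia.
apply: IH => // p' q' r' lt'; apply: IHk => //.
by move: r r'; rewrite /isroot; lia.
Qed.

Lemma addn_pair_lt p q a b : p <= a -> q <= b -> (p, q) != (a, b) -> p + q < a + b.
Proof.
by move=> pa qb ne; rewrite ltnNge; apply: contra ne => le; apply/eqP; congr (_, _); lia.
Qed.

Lemma root_step_towards n p q p' q' : isroot n p q -> isroot n p' q' ->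
  p <= p' -> q <= q' -> (p, q) != (p', q') ->
  (isroot n p q.+1 /\ q < q') \/ (isroot n p.+1 q /\ p < p').
Proof.
rewrite /isroot => r r' pp qq ne; case: (ltnP q q') => lt; first by left; lia.
right; suff : p < p' by lia.
by rewrite ltn_neqAle pp andbT; apply: contraNneq ne => ->; rewrite (_ : q = q') //; lia.
Qed.

Definition root_lt (x y : nat * nat) : bool :=
  [&& x.1 <= y.1, x.2 <= y.2 & x.1 + x.2 < y.1 + y.2].

Lemma root_lt_trans : transitive root_lt.
Proof. by move=> y x z /and3P[? ? ?] /and3P[? ? ?]; apply/and3P; split; lia. Qed.

Section DyckPaths.
Variable n : nat.
Local Notation step := (dyck_step n).

Lemma line_path (f : nat -> nat * nat) a k :
  (forall i, a <= i < a + k -> step (f i) (f i.+1)) ->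
  path step (f a) [seq f i | i <- iota a.+1 k] /\
  last (f a) [seq f i | i <- iota a.+1 k] = f (a + k).
Proof.
elim: k a => [|k IH] a steps /=; first by rewrite addn0.
have [pth lst] := IH a.+1 (fun i ai => steps i (ltac:(lia))).
by rewrite pth lst addSnnS steps //; lia.
Qed.

Lemma row_path p a b : p <= a <= b -> isroot n p b ->
  exists2 s, path step (p, a) s & last (p, a) s = (p, b).
Proof.
move=> /andP[pa ab] /and4P[p1 pN pb bn].
have [pth lst] := @line_path (pair p) a (b - a) (fun i ai => ltac:(
  by rewrite /dyck_step /= eqxx /isroot; lia)).
by exists [seq (p, i) | i <- iota a.+1 (b - a)]; rewrite // lst subnKC.
Qed.

Lemma col_path a b : 0 < a <= b -> b <= n ->
  exists2 s, path step (a, b) s & last (a, b) s = (b, b).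
Proof.
move=> /andP[a1 ab] bn.
have [pth lst] := @line_path (pair^~ b) a (b - a) (fun i ai => ltac:(
  by rewrite /dyck_step /= eqxx orbT andbT /isroot; lia)).
by exists [seq (i, b) | i <- iota a.+1 (b - a)]; rewrite // lst subnKC.
Qed.

Lemma dyck_path_last x s : path step x s ->
  [/\ x.1 <= (last x s).1, x.2 <= (last x s).2 &
      isroot n x.1 x.2 -> isroot n (last x s).1 (last x s).2].
Proof.
elim: s x => [|y s IH] x //= /andP[/andP[ry xy] /IH[le1 le2 /(_ ry) rl]].
by split => //; move: le1 le2; case/orP: xy => /eqP-> /=; lia.
Qed.

Lemma dyck_path_pairwise x s : path step x s -> pairwise root_lt (x :: s).
Proof.
move=> pth; rewrite -sorted_pairwise; last exact: root_lt_trans.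
by apply: sub_path pth => a b /andP[_ /orP[] /eqP ->]; rewrite /root_lt /=; lia.
Qed.

Lemma dyck_path_mem x s y : path step x s -> y \in x :: s ->
  x.1 <= y.1 /\ y.2 <= (last x s).2.
Proof.
move=> pth; rewrite inE => /predU1P[-> | ys]; first by have [_ ? _] := dyck_path_last pth.
case/path.splitP: ys pth => s1 s2; rewrite cat_path last_cat last_rcons => /andP[p1 p2].
have [+ _ _] := dyck_path_last p1; rewrite last_rcons => le.
by have [_ + _] := dyck_path_last p2.
Qed.

End DyckPaths.

(** * Symplectic PBW-semistandard tableaux *)

(* The letter of alpha_{p,q} is q.+1: the letter q + 1 if q < n, and the letter
   \bar j = 2n + 1 - j if q = 2n - j. *)
Definition root_at n m (T : tab m n) (p q j : nat) : bool :=
  [&& isroot n p q, cell m n p j & tcoef T p j == q.+1].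

Section SymplecticTableau.
Variables (n : nat) (m : nat -> nat) (T : tab m n).
Hypothesis hT : is_SyST T.
Local Notation lam := (lamrow m n).
Local Notation t := (tcoef T).
Local Notation cell := (cell m n).
Local Notation root_at := (root_at T).

Lemma entry_out i j : ~~ cell i j -> t i j = 0.
Proof.
rewrite /tcoef => nc; case: ifP => // /andP[iN jL].
by case: hT => -> //=; rewrite !inordK.
Qed.

Lemma entry_range i j : cell i j -> 0 < t i j <= 2 * n.
Proof. by case: hT => _ [h _] /h[-> ->]. Qed.

Lemma entry_small i j : cell i j -> t i j <= mu m n j -> t i j = i.
Proof. by case: hT => _ [_ [h _]]; apply: h. Qed.

Lemma entry_col_decr i1 i2 j : cell i1 j -> cell i2 j -> t i1 j <> i1 -> i1 < i2 ->
  t i2 j < t i1 j.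
Proof. by case: hT => _ [_ [_ [h _]]]; apply: h. Qed.

Lemma entry_bar_above i i' j : cell i j -> cell i' j -> t i j = i ->
  t i' j = (2 * n).+1 - i -> i' < i.
Proof. by case: hT => _ [_ [_ [_ [h _]]]]; apply: h. Qed.

Lemma entry_prev_col i j : 1 < j -> cell i j ->
  exists i', [/\ i <= i', cell i' j.-1 & t i j <= t i' j.-1].
Proof. by case: hT => _ [_ [_ [_ [_ h]]]]; apply: h. Qed.

Lemma mu_lt_entry i j : cell i j -> t i j != i -> mu m n j < t i j.
Proof. by move=> c; apply: contraNT; rewrite -leqNgt => /(entry_small c) ->. Qed.

(* Otherwise t p j = \bar k with k < p, and row k holds either k, which (iii)
   forbids, or by induction a letter at most \bar k, which (ii) forbids. *)
Lemma entry_le_bar p j : cell p j -> t p j != p -> t p j <= (2 * n).+1 - p.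
Proof.
elim/ltn_ind: p => p IH c ne; rewrite leqNgt; apply/negP => lt.
have /andP[t0 tn] := entry_range c.
set k := (2 * n).+1 - t p j.
have ck : cell k j by apply: (cell_up c); lia.
case: (eqVneq (t k j) k) => tk.
  by have := entry_bar_above ck c tk; rewrite /k; lia.
have := entry_col_decr ck c (elimN eqP tk) (ltac:(lia) : k < p).
by have := IH k (ltac:(lia)) ck tk; rewrite /k; lia.
Qed.

Lemma entry_cases p j : cell p j -> t p j = p \/ root_at p (t p j).-1 j.
Proof.
move=> c; case: (eqVneq (t p j) p) => ne; [by left | right].
have /andP[t0 _] := entry_range c.
have := mu_lt_entry c ne; have := cell_le_mu c; have := entry_le_bar c ne.
have [p0 pN _ _] := cell_bounds c.
by rewrite /root_at /isroot c p0 pN prednK //= eqxx andbT; lia.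
Qed.

Lemma root_at_inv p q j : root_at p q j ->
  [/\ cell p j, lam q.+1 < j, t p j = q.+1 & isroot n p q].
Proof.
case/and3P=> r c /eqP e; split=> //; rewrite ltnNge; apply/negP => le.
have [p0 pN j0 _] := cell_bounds c; have [_ _ pq _] := and4P r.
have cq : cell q.+1 j.
  rewrite /cell; case: (leqP q.+1 n) => nq; first lia.
  by move: le; rewrite lamrow_eq0 //; lia.
by have := cell_le_mu cq; have := mu_lt_entry c; rewrite e; lia.
Qed.

Lemma root_at_antichain p q p' q' j : root_at p q j -> root_at p' q' j ->
  p <= p' -> q <= q' -> p = p' /\ q = q'.
Proof.
move=> /root_at_inv[c _ e /and4P[_ _ pq _]] /root_at_inv[c' _ e' _] pp' qq'.
case: (ltnP p p') => lt.
  by have := entry_col_decr c c' (ltac:(lia)) lt; lia.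
have ep : p = p' by lia.
by subst p'; split=> //; move: e; rewrite e'; lia.
Qed.

Lemma root_at_left p q j : root_at p q j -> 1 < j -> lam q.+1 < j.-1 ->
  exists p' q', [/\ p <= p', q <= q' & root_at p' q' j.-1].
Proof.
move=> C j1 lt; have [c _ e _] := root_at_inv C.
have [i' [pi' ci' le]] := entry_prev_col j1 c.
case: (entry_cases ci') => h.
  have := cell_up ci' (ltac:(lia) : 0 < q.+1 <= i').
  by case/cell_bounds=> _ _ _; move: le; rewrite e h; lia.
by exists i', (t i' j.-1).-1; split=> //; move: le; rewrite e; lia.
Qed.

(* Going left from column j, root_at_left produces a chain of ever larger
   roots that must stay above (p, q) and cannot meet it in column j'. *)
Lemma root_at_col_lt p q a b j j' : root_at p q j' -> root_at a b j ->
  p <= a -> q <= b -> (p, q) != (a, b) -> j < j'.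
Proof.
move=> Cpq; have [cpq lt' _ _] := root_at_inv Cpq.
elim: j {-2}j (leqnn j) a b => [|k IH] j jk a b Cab pa qb ne.
  by have [c _ _ _] := root_at_inv Cab; have [_ _ j0 _] := cell_bounds c; lia.
case: (ltngtP j j') => // [j'j|ej]; last first.
  by subst j'; have [ea eb] := root_at_antichain Cpq Cab pa qb; rewrite ea eb eqxx in ne.
have [_ ltb _ _] := root_at_inv Cab; have [_ _ j'0 _] := cell_bounds cpq.
have lb := @lamrow_nonincr n m q.+1 b.+1 (ltac:(lia)).
have [a' [b' [aa' bb' C']]] := root_at_left Cab (ltac:(lia)) (ltac:(lia)).
suff : j.-1 < j' by lia.
apply: (IH _ _ a' b') => //; try lia.
by apply/eqP => -[ea eb]; move/eqP: ne; apply; congr (_, _); lia.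
Qed.

End SymplecticTableau.

Definition tab_point n m (T : tab m n) : point n :=
  [ffun x : 'I_n.+1 * 'I_(2 * n).+1 =>
     \sum_(1 <= j < (lam1 m n).+1) (root_at T x.1 x.2 j : nat)].

Lemma coef_tab_point n m (T : tab m n) p q :
  coef (tab_point T) (p, q) = \sum_(1 <= j < (lam1 m n).+1) (root_at T p q j : nat).
Proof.
rewrite /coef /=; case: ifP => [/andP[pn q2n] | out]; first by rewrite ffunE /= !inordK.
rewrite big1 // => j _; apply/eqP; rewrite eqb0; apply: contraFN out => /and3P[].
by rewrite /isroot; lia.
Qed.

(** * The tableau of an FFLV point *)

Section Reach.
Variables (n : nat) (m : nat -> nat) (P : point n).
Local Notation lam := (lamrow m n).
Local Notation c p q := (coef P (p, q)).
Local Notation root := (isroot n).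

Fixpoint reach_iter k p q : nat :=
  c p q + if k is k'.+1 then
    maxn (lam q.+1) (maxn (if root p q.+1 then reach_iter k' p q.+1 else 0)
                          (if root p.+1 q then reach_iter k' p.+1 q else 0))
  else lam q.+1.

(* The fuel (2 * n).+1 exceeds the length of every Dyck path. *)
Definition reach p q := reach_iter (2 * n).+1 p q.

Lemma reach_iter_stable k k' p q : root p q -> 2 * n - (p + q) < k <= k' ->
  reach_iter k p q = reach_iter k' p q.
Proof.
elim: k k' p q => [|k IH] [|k'] p q r /andP[lt le] //=; try lia.
by congr (_ + maxn _ (maxn _ _)); case: ifP => // r'; apply: IH => //;
  move: r r'; rewrite /isroot; lia.
Qed.

Lemma reachE p q : root p q ->
  reach p q = c p q + maxn (lam q.+1)
    (maxn (if root p q.+1 then reach p q.+1 else 0)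
          (if root p.+1 q then reach p.+1 q else 0)).
Proof.
move=> r; rewrite [LHS]/reach /=.
by congr (_ + maxn _ (maxn _ _)); case: ifP => // r'; apply: reach_iter_stable => //;
  move: r r'; rewrite /isroot; lia.
Qed.

Lemma reach_ge p q : root p q -> c p q + lam q.+1 <= reach p q.
Proof. by move=> r; rewrite reachE // leq_add2l leq_maxl. Qed.

Lemma reach_ge_nextq p q : root p q -> root p q.+1 -> c p q + reach p q.+1 <= reach p q.
Proof. by move=> r r'; rewrite (reachE r) r' leq_add2l; lia. Qed.

Lemma reach_ge_nextp p q : root p q -> root p.+1 q -> c p q + reach p.+1 q <= reach p q.
Proof. by move=> r r'; rewrite (reachE r) r' leq_add2l; lia. Qed.

Lemma reach_nonincr p q p' q' : root p q -> root p' q' -> p <= p' -> q <= q' ->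
  reach p' q' <= reach p q.
Proof.
move=> r; move: p q r p' q'; apply: isroot_ind => p q r IH p' q' r' pp qq.
case: (eqVneq (p, q) (p', q')) => [[-> ->] // | ne].
case: (root_step_towards r r' pp qq ne) => [[rs lt] | [rs lt]].
  apply: leq_trans (leq_trans (leq_addl _ _) (reach_ge_nextq r rs)).
  by apply: IH => //; lia.
apply: leq_trans (leq_trans (leq_addl _ _) (reach_ge_nextp r rs)).
by apply: IH => //; lia.
Qed.

Lemma reach_add_le p q p' q' : root p q -> root p' q' -> p <= p' -> q <= q' ->
  (p, q) != (p', q') -> c p q + reach p' q' <= reach p q.
Proof.
move=> r r' pp qq ne; case: (root_step_towards r r' pp qq ne) => [[rs lt] | [rs lt]].
  by apply: leq_trans (reach_ge_nextq r rs); rewrite leq_add2l reach_nonincr.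
by apply: leq_trans (reach_ge_nextp r rs); rewrite leq_add2l reach_nonincr.
Qed.

Lemma reach_step p q : root p q -> lam q.+1 < reach p q - c p q ->
  (root p q.+1 /\ reach p q.+1 = reach p q - c p q) \/
  (root p.+1 q /\ reach p.+1 q = reach p q - c p q).
Proof. by move=> r; rewrite (reachE r) addKn; case: ifP; case: ifP; lia. Qed.

Lemma reach_attained p q : root p q -> exists p' q', [/\ root p' q', p <= p', q <= q',
  reach p' q' = reach p q & (0 < c p' q') || (reach p' q' == lam q'.+1)].
Proof.
move: p q; apply: isroot_ind => p q r IH.
case: (posnP (c p q)) => c0; last by exists p, q; rewrite c0.
case: (leqP (reach p q - c p q) (lam q.+1)) => le.
  have := reach_ge r; rewrite c0 => ge.
  by exists p, q; split => //; apply/orP; right; apply/eqP; lia.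
case: (reach_step r le) => [[r' e] | [r' e]];
  have [p' [q' [? ? ? ? ?]]] := IH _ _ r' (ltac:(lia));
  by exists p', q'; split => //; lia.
Qed.

Lemma reach_path p q : root p q -> exists ds, path (dyck_step n) (p, q) ds /\
  reach p q = \sum_(y <- (p, q) :: ds) coef P y + lam (last (p, q) ds).2.+1.
Proof.
move: p q; apply: isroot_ind => p q r IH; have := reach_ge r.
case: (leqP (reach p q - c p q) (lam q.+1)) => le ge.
  by exists [::]; rewrite big_seq1 /=; lia.
case: (reach_step r le) => [[r' e] | [r' e]].
  have [ds [pds eds]] := IH _ _ r' (ltac:(lia)).
  exists ((p, q.+1) :: ds); rewrite /= pds /dyck_step r' eqxx big_cons /=.
  by split => //; lia.
have [ds [pds eds]] := IH _ _ r' (ltac:(lia)).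
exists ((p.+1, q) :: ds); rewrite /= pds /dyck_step r' eqxx orbT big_cons /=.
by split => //; lia.
Qed.

End Reach.

Section FFLVBounds.
Variables (n : nat) (m : nat -> nat) (P : point n).
Hypothesis hP : in_S m P.
Local Notation lam := (lamrow m n).

Lemma dyck_from_sum_le i s : dyck_from n i (i, i) s ->
  \sum_(y <- (i, i) :: s) coef P y + lam (last (i, i) s).2.+1 <= lam i.
Proof.
case/and4P => i1 iN _ pth.
have [_ ia /(_ (ltac:(rewrite /isroot /=; lia)))] := dyck_path_last pth.
case Ez: (last (i, i) s) ia => [a b] /= ia /and4P[a1 aN ab ba].
have sum_cat t :
    \sum_(y <- (i, i) :: s) coef P y <= \sum_(y <- (i, i) :: s ++ t) coef P y.
  by rewrite -cat_cons big_cat leq_addr.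
case: (ltnP b n) => bn.
  have [t pt lt] := @col_path n a b (ltac:(lia)) (ltnW bn).
  have df : dyck_from n i (i, i) (s ++ t).
    by rewrite /dyck_from i1 iN eqxx cat_path pth Ez.
  have := (hP.2 _ _ _ df).1 b (ltnW bn); rewrite last_cat Ez lt => /(_ erefl).
  by have := sum_cat t; rewrite (@lamrow_split n m i b.+1) /=; lia.
have [t pt lt] := @row_path n a b (2 * n - a) (ltac:(lia)) (ltac:(rewrite /isroot; lia)).
have df : dyck_from n i (i, i) (s ++ t) by rewrite /dyck_from i1 iN eqxx cat_path pth Ez.
have := (hP.2 _ _ _ df).2 a a1 aN; rewrite last_cat Ez lt => /(_ erefl).
by have := sum_cat t; rewrite lamrow_eq0 // /lamrow /=; lia.
Qed.

Lemma reach_le_lamrow p q : isroot n p q -> reach m P p q <= lam p.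
Proof.
move=> r; have [s [pth ->]] := reach_path m P r.
have [p1 pN pq _] := and4P r.
have [t pt lt] := @row_path n p p q (ltac:(lia)) r.
have df : dyck_from n p (p, p) (t ++ s) by rewrite /dyck_from p1 pN eqxx cat_path pt lt.
apply: leq_trans (dyck_from_sum_le df).
rewrite last_cat lt -cat_cons big_cat /= leq_add2r.
by rewrite big_cons leq_add2r -[X in X <= _]/(coef P (p, q)) -lt last_le_sum.
Qed.

End FFLVBounds.

Definition fflv_root_at n m (P : point n) p q j : bool :=
  [&& isroot n p q, 0 < coef P (p, q),
      reach m P p q - coef P (p, q) < j & j <= reach m P p q].

Definition fflv_entry n m (P : point n) p j : nat :=
  if cell m n p j then
    if [pick q : 'I_(2 * n).+1 | fflv_root_at m P p q j] is Some q then q.+1 else p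
  else 0.

Definition fflv_tab n m (P : point n) : tab m n :=
  [ffun x : 'I_n.+1 * 'I_(lam1 m n).+1 => fflv_entry m P x.1 x.2].

Section FFLVTableau.
Variables (n : nat) (m : nat -> nat) (P : point n).
Local Notation lam := (lamrow m n).
Local Notation cell := (cell m n).
Local Notation froot_at := (fflv_root_at m P).
Local Notation e := (fflv_entry m P).

Lemma fflv_root_at_antichain p q p' q' j : froot_at p q j -> froot_at p' q' j ->
  p <= p' -> q <= q' -> p = p' /\ q = q'.
Proof.
move=> /and4P[r c0 lo hi] /and4P[r' _ lo' hi'] pp qq.
case: (eqVneq (p, q) (p', q')) => [[-> ->] // | ne].
by have := reach_add_le m P r r' pp qq ne; lia.
Qed.

Lemma fflv_root_at_lam_lt p q j : froot_at p q j -> lam q.+1 < j.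
Proof. by case/and4P=> r _ lo _; have := reach_ge m P r; lia. Qed.

Lemma fflv_entry_cases p j : cell p j ->
  (e p j = p /\ forall q, ~~ froot_at p q j) \/
  (exists2 q, froot_at p q j & e p j = q.+1).
Proof.
rewrite /fflv_entry => ->; case: pickP => [q Cq | none]; first by right; exists q.
left; split => // q; apply/negP => Cq.
have qn : q < (2 * n).+1 by case/and4P: Cq => /and4P[]; lia.
by have := none (Ordinal qn); rewrite /= Cq.
Qed.

Lemma fflv_entry_root p q j : cell p j -> froot_at p q j -> e p j = q.+1.
Proof.
move=> /fflv_entry_cases[[_ /(_ q)/negP] // | [q' C' ->] C].
case: (leqP q q') => qq; first by have [_ ->] := fflv_root_at_antichain C C' (leqnn p) qq.
by have [_ ->] := fflv_root_at_antichain C' C (leqnn p) (ltnW qq).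
Qed.

Lemma tcoef_fflv_tab i j : tcoef (fflv_tab m P) i j = e i j.
Proof.
rewrite /tcoef; case: ifP => [/andP[iN jL] | out]; first by rewrite ffunE /= !inordK.
by rewrite /fflv_entry; case: ifP => // /cell_le_lam1; rewrite out.
Qed.

Lemma fflv_entry_ge p j : cell p j -> p <= e p j.
Proof.
by case/fflv_entry_cases => [[-> _] // | [q /and4P[/and4P[_ _ pq _] _ _ _] ->]]; lia.
Qed.

Hypothesis hP : in_S m P.

Lemma fflv_root_at_cell p q j : froot_at p q j -> cell p j.
Proof.
case/and4P=> r c0 lo hi; have := reach_le_lamrow hP r; have := reach_ge m P r.
by case/and4P: r; rewrite /cell; lia.
Qed.

Lemma root_at_fflv_tab p q j : root_at (fflv_tab m P) p q j = froot_at p q j.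
Proof.
rewrite /root_at tcoef_fflv_tab; apply/and3P/idP => [[r c /eqP] | C]; last first.
  have c := fflv_root_at_cell C.
  by split => //; [case/and4P: C | rewrite (fflv_entry_root c C)].
case: (fflv_entry_cases c) => [[-> _] | [q' C' ->] [<-] //].
by case/and4P: r; lia.
Qed.

Lemma fflv_tab_range i j : cell i j -> 0 < e i j <= 2 * n.
Proof.
move=> c; have [i0 iN _ _] := cell_bounds c.
by case: (fflv_entry_cases c) => [[-> _] | [q /and4P[/and4P[_ _ _ qb] _ _ _] ->]]; lia.
Qed.

Lemma fflv_tab_small i j : cell i j -> e i j <= mu m n j -> e i j = i.
Proof.
move=> c; case: (fflv_entry_cases c) => [[-> _] // | [q C ->] le].
by have [_ _ j0 _] := cell_bounds c; have := mu_le j0 (fflv_root_at_lam_lt C); lia.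
Qed.

Lemma fflv_tab_col_decr i1 i2 j : cell i1 j -> cell i2 j -> e i1 j <> i1 -> i1 < i2 ->
  e i2 j < e i1 j.
Proof.
move=> c1 c2; case: (fflv_entry_cases c1) => [[-> _] // | [q1 C1 ->] _ lt].
have lt1 := fflv_root_at_lam_lt C1.
case: (fflv_entry_cases c2) => [[-> _] | [q2 C2 ->]].
  have [_ _ _ j2] := cell_bounds c2; rewrite ltnS leqNgt; apply/negP => q1i2.
  by have := @lamrow_nonincr n m _ _ q1i2; lia.
rewrite ltnS leqNgt; apply/negP => q12.
by have [] := fflv_root_at_antichain C1 C2 (ltnW lt) q12; lia.
Qed.

Lemma fflv_tab_bar_above i i' j : cell i j -> cell i' j -> e i j = i ->
  e i' j = (2 * n).+1 - i -> i' < i.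
Proof.
move=> c c' ei; have [i0 iN _ _] := cell_bounds c; have [_ i'N _ _] := cell_bounds c'.
case: (fflv_entry_cases c') => [[-> _] | [q C ->] bar]; first lia.
have /and4P[_ _ _ qb] : isroot n i' q by case/and4P: C.
case: (ltngtP i' i) => // [lt | ii']; first lia.
subst i'; move: ei; rewrite (fflv_entry_root c C).
by case/and4P: C => /and4P[_ _ iq _]; lia.
Qed.

Lemma fflv_root_at_edge p q j : isroot n p q -> lam q.+1 < j ->
  reach m P p q - coef P (p, q) = j ->
  exists p' q', [/\ p <= p', q <= q' & froot_at p' q' j].
Proof.
move=> r lt edge.
have [s1 [s2 [rs ps1 qs2 es]]] : exists s1 s2,
    [/\ isroot n s1 s2, p <= s1, q <= s2 & reach m P s1 s2 = j].
  case: (reach_step r (ltac:(lia) : lam q.+1 < reach m P p q - coef P (p, q))).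
    by case=> r' e'; exists p, q.+1; split => //; lia.
  by case=> r' e'; exists p.+1, q; split => //; lia.
have [z1 [z2 [rz sz1 sz2 ez cz]]] := reach_attained m P rs.
have lz := @lamrow_nonincr n m q.+1 z2.+1 (ltac:(lia)).
case/orP: cz => [cz | /eqP ez']; last lia.
by exists z1, z2; split; [lia | lia | rewrite /fflv_root_at rz cz ez es /=; lia].
Qed.

Lemma fflv_tab_prev_col i j : 1 < j -> cell i j ->
  exists i', [/\ i <= i', cell i' j.-1 & e i j <= e i' j.-1].
Proof.
move=> j1 c; have c' := cell_left c j1.
case: (fflv_entry_cases c) => [[-> _] | [q C ->]].
  by exists i; split => //; apply: fflv_entry_ge.
case: (boolP (froot_at i q j.-1)) => C'.
  by exists i; rewrite (fflv_entry_root c' C').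
have [r c0 _ _] := and4P C; have [i0 iN iq _] := and4P r.
have edge : reach m P i q - coef P (i, q) = j.-1.
  by move: C C'; rewrite /fflv_root_at r c0 /=; lia.
(* Column j.-1 lies just left of the columns of alpha_{i,q}: either row q.+1
   still reaches it, or a larger root with nonzero coefficient ends there. *)
case: (leqP j.-1 (lam q.+1)) => [le | lt].
  have qn : q.+1 <= n.
    by rewrite leqNgt; apply/negP => nq; move: le; rewrite lamrow_eq0 //; lia.
  have cq : cell q.+1 j.-1 by rewrite /cell; lia.
  by exists q.+1; split => //; [lia | apply: fflv_entry_ge].
have [z1 [z2 [iz qz Cz]]] := fflv_root_at_edge r lt edge.
have cz := fflv_root_at_cell Cz.
by exists z1; rewrite (fflv_entry_root cz Cz); split => //; lia.
Qed.

Lemma fflv_tab_SyST : is_SyST (fflv_tab m P).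
Proof.
split; [|split; [|split; [|split; [|split]]]]
  => [x out | i j | i j | i1 i2 j | i i' j | i j]; rewrite ?tcoef_fflv_tab.
- by rewrite ffunE /fflv_entry (negbTE out).
- by move=> /fflv_tab_range /andP.
- exact: fflv_tab_small.
- exact: fflv_tab_col_decr.
- exact: fflv_tab_bar_above.
- by move=> j1 /(fflv_tab_prev_col j1)[i' [? ? ?]]; exists i'; rewrite tcoef_fflv_tab.
Qed.

Lemma tab_point_fflv_tab : tab_point (fflv_tab m P) = P.
Proof.
apply/ffunP => x; rewrite ffunE.
have Px : P x = coef P (x.1 : nat, x.2 : nat).
  rewrite /coef /= -[_ <= n]ltnS -[_ <= 2 * n]ltnS !ltn_ord.
  by rewrite !inord_val -surjective_pairing.
under eq_bigr do rewrite root_at_fflv_tab.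
case: (boolP (isroot n x.1 x.2)) => r; last first.
  by rewrite (hP.1 x r) big1 // => j _; rewrite /fflv_root_at (negbTE r).
rewrite Px; case: (posnP (coef P (x.1 : nat, x.2 : nat))) => [c0 | c0].
  by rewrite c0 big1 // => j _; rewrite /fflv_root_at c0 andbF.
under eq_bigr do rewrite /fflv_root_at r c0 /=.
have le1 := reach_le_lamrow hP r.
have le2 := @lamrow_le_lam1 n m x.1 (ltac:(by case/and4P: r)).
rewrite sum_interval_indicator (minn_idPl (leq_trans le1 le2)) subKn //.
exact: leq_trans (leq_addr _ _) (reach_ge m P r).
Qed.

End FFLVTableau.

(** * The FFLV point of a tableau *)

Section TableauPoint.
Variables (n : nat) (m : nat -> nat) (T : tab m n).
Hypothesis hT : is_SyST T.
Local Notation lam := (lamrow m n).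
Local Notation P := (tab_point T).
Local Notation reach := (reach m P).
Local Notation root := (isroot n).

(* Exchanging the sums, column j meets the path at most once (two roots of a
   Dyck path are comparable), and only when lambda_{q'+1} < j <= lambda_i. *)
Lemma tab_point_dyck_sum i d s : dyck_from n i d s ->
  \sum_(x <- d :: s) coef P x <= lam i - lam (last d s).2.+1.
Proof.
case/and4P => i1 iN /eqP-> pth; set z := last _ s.
under eq_bigr => x _ do rewrite {1}[x]surjective_pairing coef_tab_point.
rewrite exchange_big /=.
have := sum_interval_indicator (lam z.2.+1) (lam i) (lam1 m n).
rewrite (minn_idPl (lamrow_le_lam1 _ _ i1)) => <-; apply: leq_sum => j _.
case: (boolP (lam z.2.+1 < j <= lam i)) => inside.
  apply: sum_indicator_pairwise_le1 (dyck_path_pairwise pth) _.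
  move=> x y /and3P[xy1 xy2 lt] Cx Cy.
  by have [] := root_at_antichain hT Cx Cy xy1 xy2; lia.
rewrite big1_seq // => -[a b] /andP[_ xs]; apply/eqP; rewrite eqb0.
apply: contraNN inside => Cab; have [cab lt _ _] := root_at_inv hT Cab.
have [_ _ _ ja] := cell_bounds cab.
have [ia bz] := dyck_path_mem pth xs; rewrite -/z in bz.
have l1 := @lamrow_nonincr n m i a ia.
have l2 := @lamrow_nonincr n m b.+1 z.2.+1 bz.
by rewrite /= in lt ja; lia.
Qed.

Lemma tab_point_in_S : in_S m P.
Proof.
split=> [x /negbTE nr | i d s df /=].
  by rewrite ffunE big1 // => j _; rewrite /root_at nr.
have sum := tab_point_dyck_sum df; case/and4P: df => i1 iN /eqP ed pth; subst d.
have [le1 _ _] := dyck_path_last pth.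
split=> [j jn | j j1 jn] lst; rewrite lst /= in sum le1.
  by rewrite (@lamrow_split n m i j.+1) in sum; lia.
by rewrite (@lamrow_eq0 n m (2 * n - j).+1) /lamrow in sum; lia.
Qed.

(* Induction over the roots above (p, q): they occupy columns left of those of
   alpha_{p,q} (root_at_col_lt), so the columns holding alpha_{p,q} lie right of
   reach p q - P_{p,q}, and they are closed under stepping left down to it. *)
Section Induction.
Variables p q : nat.
Hypothesis above : forall a b, root a b -> p + q < a + b ->
  root_at T a b =1 fflv_root_at m P a b.

Lemma reach_lt_root_col j : root_at T p q j ->
  forall a b, root a b -> p <= a -> q <= b -> (p, q) != (a, b) -> reach a b < j.
Proof.
move=> C; have [c lt _ _] := root_at_inv hT C; have [_ _ j0 _] := cell_bounds c.
apply: isroot_ind => a b r IH pa qb ne.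
have lb := @lamrow_nonincr n m q.+1 b.+1 (ltac:(lia)).
have pqab := addn_pair_lt pa qb ne.
case: (posnP (coef P (a, b))) => ca; last first.
  have Cab : fflv_root_at m P a b (reach a b).
    by have := reach_ge m P r; rewrite /fflv_root_at r ca leqnn /= andbT; lia.
  rewrite -above // in Cab; exact: (root_at_col_lt hT C Cab pa qb ne).
rewrite (reachE m P r) ca add0n !gtn_max; apply/and3P; split; first lia.
  by case: ifP => // r'; apply: IH => //; try lia; apply/eqP; case; lia.
by case: ifP => // r'; apply: IH => //; try lia; apply/eqP; case; lia.
Qed.

Lemma root_at_reach_lt j : root_at T p q j -> reach p q - coef P (p, q) < j.
Proof.
move=> C; have [c lt _ r] := root_at_inv hT C; have [_ _ j0 _] := cell_bounds c.
rewrite (reachE m P r) addKn !gtn_max lt /=.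
by apply/andP; split; case: ifP => // r';
  apply: (reach_lt_root_col C r'); rewrite ?leqnn //; apply/eqP; case; lia.
Qed.

Lemma root_at_prev_col j : root_at T p q j -> reach p q - coef P (p, q) < j.-1 ->
  root_at T p q j.-1.
Proof.
move=> C lt; have [_ _ _ r] := root_at_inv hT C; have ge := reach_ge m P r.
have [a [b [pa qb C']]] := root_at_left hT C (ltac:(lia)) (ltac:(lia)).
case: (eqVneq (p, q) (a, b)) => [[-> ->] // | ne].
have [_ _ _ r'] := root_at_inv hT C'.
have pqab := addn_pair_lt pa qb ne.
rewrite above // in C'; case/and4P: C' => _ _ _ hi.
by have := reach_add_le m P r r' pa qb ne; lia.
Qed.

End Induction.

Lemma root_at_tab_point p q : root_at T p q =1 fflv_root_at m P p q.
Proof.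
move=> j; case: (boolP (root p q)) => [r | /negbTE r]; last first.
  by rewrite /root_at /fflv_root_at r.
move: p q r j; apply: isroot_ind => p q r IH j.
have := @interval_of_left_closed (root_at T p q) (reach p q - coef P (p, q)) (lam1 m n).
rewrite -coef_tab_point => -> //=.
- rewrite /fflv_root_at r /=; have := reach_ge m P r.
  by case: (posnP (coef P (p, q))) => c0 /=; lia.
- move=> i C; rewrite (root_at_reach_lt IH C) /=; have [c _ _ _] := root_at_inv hT C.
  by have /andP[] := cell_le_lam1 c.
- by move=> i C; apply: root_at_prev_col.
Qed.

Lemma fflv_tab_tab_point : fflv_tab m P = T.
Proof.
apply/ffunP => x; rewrite ffunE.
have -> : T x = tcoef T x.1 x.2.
  rewrite /tcoef -[_ <= n]ltnS -[_ <= lam1 m n]ltnS !ltn_ord.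
  by rewrite !inord_val -surjective_pairing.
case: (boolP (cell m n x.1 x.2)) => c; last by rewrite /fflv_entry (negbTE c) entry_out.
case: (entry_cases hT c) => [tx | C].
  rewrite tx; case: (fflv_entry_cases P c) => [[-> _] // | [q C ->]].
  rewrite -root_at_tab_point in C; have [_ _ e /and4P[_ _ pq _]] := root_at_inv hT C.
  by move: e; rewrite tx; lia.
rewrite root_at_tab_point in C; rewrite (fflv_entry_root c C) prednK //.
by have /andP[] := entry_range hT c.
Qed.

End TableauPoint.


(** * Weights *)

Section Weights.
Import GRing.Theory.
Local Open Scope ring_scope.

Lemma natz_sum (I : Type) (r : seq I) (P : pred I) (F : I -> nat) :
  (\sum_(i <- r | P i) F i)%N%:Z = \sum_(i <- r | P i) (F i)%:Z.
Proof. exact: (big_morph Posz PoszD (erefl _)). Qed.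

Lemma sum_indicator_uniq (I : finType) (Q : pred I) :
  (forall x y, Q x -> Q y -> x = y) -> (\sum_(x : I) (Q x : nat))%N = [exists x, Q x].
Proof.
move=> uniq; case: (boolP [exists x, Q x]) => [/existsP[x Qx] | /existsPn none].
  rewrite (bigD1 x) //= Qx big1 // => y yx; apply/eqP; rewrite eqb0.
  by apply: contra yx => Qy; rewrite (uniq _ _ Qy Qx).
by rewrite big1 // => y _; rewrite (negbTE (none y)).
Qed.

Lemma eps_neq i k : k != i -> eps i k = 0.
Proof. by rewrite /eps => /negbTE ->. Qed.

Lemma sum_alpha n a b k : (a <= b <= n)%N ->
  \sum_(a <= l < b) alpha n l k = eps a k - eps b k.
Proof.
case/andP=> ab bn; rewrite (telescope_sumr_eq (fun l => - eps l k) _ ab).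
  by rewrite opprK addrC.
by move=> l /andP[_ lb]; rewrite /alpha (leq_trans lb bn) opprK addrC.
Qed.

(* Since k <= n, eps q.+1 k vanishes when q >= n and eps (2 * n - q) k when q < n. *)
Lemma rootwtE n p q k : isroot n p q -> (0 < k <= n)%N ->
  rootwt n p q k = eps p k - eps q.+1 k + eps (2 * n - q) k.
Proof.
case/and4P=> p1 pn pq qb /andP[k1 kn]; rewrite /rootwt.
have alpha_n : alpha n n k = 2%:Z * eps n k by rewrite /alpha ltnn.
have eps_out i : (n < i)%N -> eps i k = 0 by move=> ni; apply: eps_neq; apply/eqP; lia.
case: (ltngtP q n) => [qn | nq | ->].
- by rewrite sum_alpha ?(eps_out (2 * n - q)%N) ?addr0 //; lia.
- by rewrite big_nat_recr //= !sum_alpha ?alpha_n ?(eps_out q.+1) //; lia.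
- have -> : (2 * n - n = n)%N by lia.
  by rewrite big_nat_recr //= sum_alpha ?alpha_n ?(eps_out n.+1) //; lia.
Qed.

Section ColumnWeight.
Variables (n : nat) (m : nat -> nat) (T : tab m n).
Hypothesis hT : is_SyST T.
Variable k : nat.
Hypothesis hk : (0 < k <= n)%N.
Local Notation II := ('I_n.+1 * 'I_(2 * n).+1)%type.
Local Notation t := (tcoef T).
Local Notation cell := (cell m n).
Local Notation C x j := (root_at T x.1 x.2 j).

Lemma root_at_ord p q j : root_at T p q j ->
  exists2 x : II, C x j & (x.1 : nat, x.2 : nat) = (p, q).
Proof.
move=> Cpq; have [_ _ _ /and4P[_ pn _ qb]] := root_at_inv hT Cpq.
by exists (inord p, inord q); rewrite /= !inordK //; lia.
Qed.

Lemma root_at_col_inj (x y : II) j : C x j -> C y j ->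
  x.1 = y.1 :> nat \/ x.2 = y.2 :> nat -> x = y.
Proof.
move=> Cx Cy same; suff [e1 e2] : x.1 = y.1 :> nat /\ x.2 = y.2 :> nat.
  by move: x y {Cx Cy same} e1 e2 => [a b] [c d] /= /val_inj-> /val_inj->.
have [_ _ ex _] := root_at_inv hT Cx; have [_ _ ey _] := root_at_inv hT Cy.
case: same => [e | e].
  by split => //; move: ex; rewrite e ey; case.
split=> //; case: (leqP x.1 y.1) => le.
  by have [] := root_at_antichain hT Cx Cy le (eq_leq e).
by have [] := root_at_antichain hT Cy Cx (ltnW le) (eq_leq (esym e)).
Qed.

Lemma col_rootwt j :
  \sum_(x : II) (C x j : nat)%:Z * rootwt n x.1 x.2 k =
    ([exists x : II, C x j && (k == x.1)] : nat)%:Z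
  - ([exists x : II, C x j && (k == x.2.+1)] : nat)%:Z
  + ([exists x : II, C x j && (k == 2 * n - x.2)%N] : nat)%:Z.
Proof.
under eq_bigr => x _.
  have -> : (C x j : nat)%:Z * rootwt n x.1 x.2 k =
      (C x j && (k == x.1) : nat)%:Z - (C x j && (k == x.2.+1) : nat)%:Z
      + (C x j && (k == 2 * n - x.2)%N : nat)%:Z.
    case: (boolP (C x j)) => Cx; last by rewrite mul0r.
    by rewrite mul1r (rootwtE _ hk) //; case/and3P: Cx.
  over.
rewrite big_split sumrB /= -!natz_sum !sum_indicator_uniq //
  => x y /andP[Cx /eqP ex] /andP[Cy /eqP ey]; apply: (root_at_col_inj Cx Cy).
all: by have := ltn_ord x.2; have := ltn_ord y.2; lia.
Qed.

Lemma has_root_in_row j : [exists x : II, C x j && (k == x.1)] = cell k j && (t k j != k).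
Proof.
apply/existsP/andP => [[x /andP[Cx /eqP->]] | [c ne]].
  by have [c _ -> /and4P[_ _ pq _]] := root_at_inv hT Cx; split => //; apply/eqP; lia.
case: (entry_cases hT c) => [e | Ck]; first by rewrite e eqxx in ne.
by have [x Cx [e1 _]] := root_at_ord Ck; exists x; rewrite Cx e1 eqxx.
Qed.

Lemma appears_letter j :
  appears T j k = (cell k j && (t k j == k)) || [exists x : II, C x j && (k == x.2.+1)].
Proof.
apply/hasP/orP => [[i _ /andP[c /eqP e]] |
                   [/andP[c /eqP e] | /existsP[x /andP[Cx /eqP e]]]].
- case: (entry_cases hT c) => [ti | Ci].
    have ik : i = k by rewrite -e ti.
    by left; rewrite -ik c ti eqxx.
  right; have [x Cx [_ e2]] := root_at_ord Ci; apply/existsP; exists x.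
  by have /andP[t0 _] := entry_range hT c; rewrite Cx e2 -e prednK ?eqxx.
- by exists k; [exact: cell_mem_iota c | rewrite c e eqxx].
- have [c _ ex _] := root_at_inv hT Cx.
  by exists (x.1 : nat); [exact: cell_mem_iota c | rewrite c ex e eqxx].
Qed.

Lemma appears_bar j :
  appears T j ((2 * n).+1 - k)%N = [exists x : II, C x j && (k == 2 * n - x.2)%N].
Proof.
apply/hasP/existsP => [[i _ /andP[c /eqP e]] | [x /andP[Cx /eqP e]]].
  case: (entry_cases hT c) => [ti | Ci].
    by have [_ iN _ _] := cell_bounds c; move: e; rewrite ti; lia.
  have [x Cx [_ e2]] := root_at_ord Ci; exists x; rewrite Cx e2 /=.
  by have /andP[t0 _] := entry_range hT c; apply/eqP; lia.
have [c _ ex /and4P[_ _ _ qb]] := root_at_inv hT Cx.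
by exists (x.1 : nat); [exact: cell_mem_iota c | rewrite c ex /=; apply/eqP; lia].
Qed.

Lemma letter_not_root j : cell k j -> ~~ [exists x : II, C x j && (k == x.2.+1)].
Proof.
move=> c; apply/existsP => -[x /andP[Cx /eqP e]].
have [_ lt _ _] := root_at_inv hT Cx; have [_ _ _ jk] := cell_bounds c.
by move: lt; rewrite -e; lia.
Qed.

Lemma col_weight j :
  (appears T j k : nat)%:Z - (appears T j ((2 * n).+1 - k)%N : nat)%:Z =
  (cell k j : nat)%:Z - \sum_(x : II) (C x j : nat)%:Z * rootwt n x.1 x.2 k.
Proof.
rewrite col_rootwt appears_letter appears_bar has_root_in_row.
case: (boolP (cell k j)) => [c | _] /=; last by case: [exists _, _]; case: [exists _, _].
rewrite (negbTE (letter_not_root c)) orbF.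
by case: (t k j == k); case: [exists _, _].
Qed.

Lemma twt_tab_point : twt T k = pwt m (tab_point T) k.
Proof.
rewrite /twt /pwt; under eq_bigr do rewrite col_weight.
rewrite sumrB; congr (_ - _).
  rewrite /lam -natz_sum; congr Posz; case/andP: hk => k0 kn.
  under eq_bigr do rewrite /cell k0 kn /=.
  by rewrite sum_interval_indicator (minn_idPl (lamrow_le_lam1 _ _ k0)) subn0.
rewrite exchange_big /=; apply: eq_bigr => x _.
by rewrite ffunE natz_sum mulr_suml.
Qed.

End ColumnWeight.

End Weights.

Theorem theorem3p16 (n : nat) (m : nat -> nat) (hn : (1 <= n)%N) :
  exists f : point n -> tab m n,
    (forall P, in_S m P -> is_SyST (f P)) /\
    (forall P Q, in_S m P -> in_S m Q -> f P = f Q -> P = Q) /\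
    (forall T, is_SyST T -> exists P, in_S m P /\ f P = T) /\
    (forall P, in_S m P -> forall k, (1 <= k)%N -> (k <= n)%N ->
       twt (f P) k = pwt m P k).
Proof.
exists (@fflv_tab n m); split; [|split; [|split]].
- by move=> P hP; apply: fflv_tab_SyST.
- by move=> P Q hP hQ e; rewrite -(tab_point_fflv_tab hP) -(tab_point_fflv_tab hQ) e.
- move=> T hT; exists (tab_point T).
  by split; [apply: tab_point_in_S | apply: fflv_tab_tab_point].
- move=> P hP k k1 kn; have hk : (0 < k <= n)%N by rewrite k1 kn.
  by rewrite -{2}(tab_point_fflv_tab hP) (twt_tab_point (fflv_tab_SyST hP) hk).
Qed.
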